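(* Assume (A2) and (A5). Then there exists $c>0$ such that, $\mathbb P$-almost surely, \[ \sup_{n\geqslant1}\sup_{x,x'\in\mathbb S_+^{d-1}:x\neq x'}\frac{|S_n^x-S_n^{x'}|}{\mathbf d(x,x')}\leqslant c \quad\text{and}\quad \sup_{n\geqslant1}\sup_{x,x'\in\mathbb S_+^{d-1}:x\neq x'}\frac{|\min_{1\leqslant j\leqslant n}S_j^x-\min_{1\leqslant j\leqslant n}S_j^{x'}|}{\mathbf d(x,x')}\leqslant c. \]
   Context: Let $d\geqslant2$, $|x|=\sum_i|\langle x,e_i\rangle|$, $\mathbb S_+^{d-1}=\{x\in\mathbb R_+^d:|x|=1\}$. $\mathcal M_+$: $d\times d$ allowable matrices (nonnegative, each row and column has a positive entry). $\|g\|=\sup_{x\in\mathbb S_+^{d-1}}|gx|$, $\iota(g)=\inf_{x\in\mathbb S_+^{d-1}}|gx|$, $N(g)=\max\{\|g\|,\iota(g)^{-1}\}$, $g^{i,j}$ entries. $(g_n)$ i.i.d. with law $\mu$; $S_n^x=\log|g_n\cdots g_1x|$. (A2) $\int(\log N(g))^{2+\delta}\mu(dg)<\infty$ for some $\delta>0$. (A5) there is $\varkappa>1$ with $\max_{i,j}g^{i,j}/\min_{i,j}g^{i,j}\leqslant\varkappa$ for $\mu$-a.e. $g$. Hilbert metric $\mathbf d(x,x')=\frac{1-m(x,x')m(x',x)}{1+m(x,x')m(x',x)}$, $m(x,x')=\min_i\langle x,e_i\rangle/\langle x',e_i\rangle$. *)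

From HB Require Import structures.
From mathcomp Require Import all_boot all_order all_algebra.
From mathcomp Require Import all_classical all_reals all_analysis.
Set Implicit Arguments. Unset Strict Implicit. Unset Printing Implicit Defensive.
Import Order.TTheory GRing.Theory Num.Theory.
Local Open Scope classical_set_scope.
Local Open Scope ring_scope.

Section Defs.
Variables (R : realType) (d : nat).

Definition l1norm (x : 'cV[R]_d) : R := \sum_(i < d) `|x i ord0|.

Definition simplex : set 'cV[R]_d :=
  [set x : 'cV[R]_d | (forall i, 0 <= x i ord0) /\ l1norm x = 1].

Definition allowable (g : 'M[R]_d) : Prop :=
  (forall i j, 0 <= g i j) /\
  (forall i, exists j, 0 < g i j) /\ (forall j, exists i, 0 < g i j).

Definition opnorm (g : 'M[R]_d) : R := sup [set l1norm (g *m x) | x in simplex].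
Definition iota (g : 'M[R]_d) : R := inf [set l1norm (g *m x) | x in simplex].
Definition Nmat (g : 'M[R]_d) : R := Num.max (opnorm g) (iota g)^-1.

(* (A5) condition for a single matrix: max_{i,j} g^{ij} / min_{i,j} g^{ij} <= kappa
   (with min_{i,j} g^{ij} > 0, so that the ratio is finite) *)
Definition A5_mat (kappa : R) (g : 'M[R]_d) : Prop :=
  (forall i j, 0 < g i j) /\ (forall i j i' j', g i j <= kappa * g i' j').

(* m(x,x') = min_i x_i / x'_i, with the convention a/0 = +oo, i.e. the minimum
   is taken over the coordinates where x'_i > 0 (= sup{l >= 0 : l x' <= x}) *)
Definition mH (x x' : 'cV[R]_d) : R :=
  inf [set x i ord0 / x' i ord0 | i in [set i | 0 < x' i ord0]].

Definition hilbert (x x' : 'cV[R]_d) : R :=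
  (1 - mH x x' * mH x' x) / (1 + mH x x' * mH x' x).

Variables (dT : measure_display) (T : measurableType dT) (P : probability T R).
Variable g : nat -> T -> 'M[R]_d.
(* g n is the paper's g_{n+1} *)

Definition mx_event (n : nat) (A : 'I_d -> 'I_d -> set R) : set T :=
  [set w | forall i j, A i j (g n w i j)].

Definition entries_measurable : Prop :=
  forall n i j, measurable_fun setT (fun w => g n w i j).

(* mutual independence of the sequence (g_n), tested on the measurable
   rectangles of R^{d x d} (a pi-system generating the Borel sets) *)
Definition mx_independent : Prop :=
  forall (s : seq nat) (A : nat -> 'I_d -> 'I_d -> set R),
    uniq s -> (forall n i j, measurable (A n i j)) ->
    P [set w | forall n, n \in s -> mx_event n (A n) w] =
    \big[*%E/1%E]_(n <- s) P (mx_event n (A n)).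

Definition mx_identically_distributed : Prop :=
  forall (n : nat) (A : 'I_d -> 'I_d -> set R),
    (forall i j, measurable (A i j)) ->
    P (mx_event n A) = P (mx_event 0 A).

(* G_n = g_n ... g_1 (here g (n-1) *m ... *m g 0), G_0 = 1 *)
Fixpoint Gprod (n : nat) (w : T) : 'M[R]_d :=
  match n with
  | 0 => 1%:M
  | n'.+1 => g n' w *m Gprod n' w
  end.

Definition Sn (n : nat) (w : T) (x : 'cV[R]_d) : R := ln (l1norm (Gprod n w *m x)).

Definition minS (n : nat) (w : T) (x : 'cV[R]_d) : R :=
  \big[Num.min/Sn 1 w x]_(1 <= j < n.+1) Sn j w x.

End Defs.

(* The estimate is deterministic: it only uses that the g_n are nonnegative and
   that g_1 satisfies (A5).
   For x, x' in the simplex and m = mH x x', the vector x - m x' is nonnegative;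
   by (A5), so is g_1 x - k^-1 g_1 x'. Nonnegative matrices preserve these
   dominations, hence |G_n x| >= max(m, 1/k) |G_n x'|, and symmetrically with
   m' = mH x' x. Thus |S_n^x - S_n^x'| <= -ln max(m, 1/k) (or the same with m'),
   and this is at most (4 + 2 ln k) d(x, x'): if m m' >= 1/3, then
   -ln m <= -ln (m m') <= 1/(m m') - 1 <= 4 d(x, x'); otherwise d(x, x') >= 1/2
   while -ln max(m, 1/k) <= ln k. The running minima inherit the bound because
   |min a c - min b e| <= max |a - b| |c - e|. *)

From HB Require Import structures.
From mathcomp Require Import all_boot all_order all_algebra.
From mathcomp Require Import all_classical all_reals all_analysis.
From mathcomp Require Import ring lra.
Set Implicit Arguments. Unset Strict Implicit.
Import Order.TTheory GRing.Theory Num.Theory.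
Local Open Scope classical_set_scope.
Local Open Scope ring_scope.

(* An entrywise inequality [t *: B <= A] is stated as [A - t *: B \is a nneg_mx],
   so that left multiplication by a nonnegative matrix preserves it by [mxOverM]. *)
Notation nneg_mx := (mxOver (Num.nneg : qualifier 0 _)).

Section NonnegativeMatrices.
Variables (R : realType) (d : nat).
Implicit Types (x y : 'cV[R]_d).

Lemma mulmx_dominated m n p (M : 'M[R]_(m, n)) (A B : 'M[R]_(n, p)) (t : R) :
  M \is a nneg_mx -> A - t *: B \is a nneg_mx ->
  M *m A - t *: (M *m B) \is a nneg_mx.
Proof. by move=> M0 AB0; rewrite scalemxAr -mulmxBr mxOverM. Qed.

Lemma l1norm_ge0 y : 0 <= l1norm y.
Proof. by apply: sumr_ge0 => i _. Qed.

Lemma l1norm_dominated y y' (t : R) :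
  y' \is a nneg_mx -> y - t *: y' \is a nneg_mx -> t * l1norm y' <= l1norm y.
Proof.
move=> /mxOverP y'0 /mxOverP yy'; rewrite /l1norm mulr_sumr; apply: ler_sum => i _.
have := yy' i ord0; rewrite !mxE nnegrE subr_ge0 ger0_norm -?nnegrE ?y'0 //.
by move/le_trans; apply; exact: ler_norm.
Qed.

Lemma simplex_nneg x : simplex x -> x \is a nneg_mx.
Proof. by move=> [x0 _]; apply/mxOverP => i j; rewrite ord1 nnegrE. Qed.

Lemma simplex_sum x : simplex x -> \sum_(i < d) x i ord0 = 1.
Proof. by move=> [x0 <-]; apply: eq_bigr => i _; rewrite ger0_norm. Qed.

Lemma simplex_exists_gt0 x : simplex x -> exists i, 0 < x i ord0.
Proof.
move=> hx; apply/not_existsP => x_le0.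
have : \sum_(i < d) x i ord0 = 0.
  by apply: big1 => i _; apply/eqP; rewrite eq_le hx.1 andbT leNgt; exact/negP.
by rewrite simplex_sum // => /eqP; rewrite oner_eq0.
Qed.

Let ratios x x' := [set x i ord0 / x' i ord0 | i in [set i | 0 < x' i ord0]].

Let ratios_ge0 x x' : simplex x -> lbound (ratios x x') 0.
Proof. by move=> hx _ [i /= hi <-]; apply: divr_ge0 => //; [exact: hx.1 | exact: ltW]. Qed.

Lemma mH_ge0 x x' : simplex x -> simplex x' -> 0 <= mH x x'.
Proof.
move=> hx hx'; apply: lb_le_inf; last exact: ratios_ge0.
by have [i hi] := simplex_exists_gt0 hx'; exists (x i ord0 / x' i ord0); exists i.
Qed.

Lemma mH_dominated x x' : simplex x -> simplex x' ->
  x - mH x x' *: x' \is a nneg_mx.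
Proof.
move=> hx hx'; apply/mxOverP => i j; rewrite ord1 !mxE nnegrE subr_ge0.
have [x'i_gt0|x'i_le0] := ltP 0 (x' i ord0); last first.
  have -> : x' i ord0 = 0 by apply/eqP; rewrite eq_le x'i_le0 hx'.1.
  by rewrite mulr0 hx.1.
rewrite -ler_pdivlMr //; apply: ge_inf; last by exists i.
by exists 0; exact: ratios_ge0.
Qed.

Lemma mH_le1 x x' : simplex x -> simplex x' -> mH x x' <= 1.
Proof.
move=> hx hx'; have := l1norm_dominated (simplex_nneg hx') (mH_dominated hx hx').
by rewrite hx.2 hx'.2 mulr1.
Qed.

Lemma A5_mulmx_dominated (k : R) (M : 'M[R]_d) x x' : 0 < k -> A5_mat k M ->
  simplex x -> simplex x' -> M *m x - k^-1 *: (M *m x') \is a nneg_mx.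
Proof.
move=> k_gt0 [M_gt0 M_ratio] hx hx'; apply/mxOverP => i j.
rewrite ord1 nnegrE mxE [X in _ + X]mxE [X in - X]mxE subr_ge0 [X in _ <= X]mxE.
have Mx'_le j' : k^-1 * (M *m x') i ord0 <= M i j'.
  rewrite ler_pdivrMl // mxE -[X in _ <= X]mulr1 -(simplex_sum hx') mulr_sumr.
  by apply: ler_sum => l _; apply: ler_wpM2r; [exact: hx'.1 | exact: M_ratio].
rewrite -[X in X <= _]mulr1 -(simplex_sum hx) mulr_sumr.
by apply: ler_sum => j' _; apply: ler_wpM2r; [exact: hx.1 | exact: Mx'_le].
Qed.

End NonnegativeMatrices.

Section HilbertRatio.
Variable R : realType.
Implicit Types (a b k p y : R).

Lemma ln_le_subr1 y : 0 < y -> ln y <= y - 1.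
Proof.
by move=> y_gt0; have := @le_ln1Dx R (y - 1); rewrite addrCA subrr addr0; apply; lra.
Qed.

Lemma hilbert_ratio_ge0 p : 0 <= p -> p <= 1 -> 0 <= (1 - p) / (1 + p).
Proof. by move=> p0 p1; apply: divr_ge0; lra. Qed.

Lemma hilbert_ratio_ge_half p : 0 <= p -> p <= 3^-1 -> 2^-1 <= (1 - p) / (1 + p).
Proof. by move=> p0 p3; rewrite ler_pdivlMr; lra. Qed.

Lemma oppr_ln_le_hilbert_ratio p : 3^-1 <= p -> p <= 1 ->
  - ln p <= 4 * ((1 - p) / (1 + p)).
Proof.
move=> p3 p1; have p_gt0 : 0 < p by lra.
rewrite -lnV ?posrE //; apply: (le_trans (ln_le_subr1 _)); first by rewrite invr_gt0.
have -> : p^-1 - 1 = (1 - p) / p by field; lra.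
rewrite ler_pdivrMr //.
set D := (1 - p) / (1 + p).
have D_def : D * (1 + p) = 1 - p by rewrite mulfVK //; lra.
have : 0 <= D * (3 * p - 1) by apply: mulr_ge0; [apply: hilbert_ratio_ge0; lra | lra].
nra.
Qed.

Lemma oppr_ln_max_le a b k : 0 <= a -> a <= 1 -> 0 <= b -> b <= 1 -> 1 < k ->
  - ln (Num.max a k^-1) <= (4 + 2 * ln k) * ((1 - a * b) / (1 + a * b)).
Proof.
move=> a0 a1 b0 b1 k1; have lnk_gt0 := ln_gt0 k1.
have ab_le_a : a * b <= a by rewrite ler_piMr.
have ab_ge0 : 0 <= a * b by exact: mulr_ge0.
have D0 := hilbert_ratio_ge0 ab_ge0 (le_trans ab_le_a a1).
have oppr_ln_max_le_ln q : 0 < q -> q <= Num.max a k^-1 -> - ln (Num.max a k^-1) <= - ln q.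
  by move=> q_gt0 q_le; rewrite lerN2 ler_ln ?posrE // (lt_le_trans q_gt0).
have [ab3|ab3] := leP 3^-1 (a * b).
  apply: (le_trans (oppr_ln_max_le_ln (a * b) _ _)); first lra.
    by rewrite le_max ab_le_a.
  apply: (le_trans (oppr_ln_le_hilbert_ratio ab3 _)); first lra.
  by have := mulr_ge0 (ltW lnk_gt0) D0; nra.
apply: (le_trans (oppr_ln_max_le_ln k^-1 _ _)); first by rewrite invr_gt0; lra.
  by rewrite le_max lexx orbT.
have := hilbert_ratio_ge_half ab_ge0 (ltW ab3).
rewrite lnV ?posrE ?opprK; last lra.
nra.
Qed.

End HilbertRatio.

Section Distances.
Variable R : realType.

Lemma ln_dist_le (u v m m' L : R) : 0 <= u -> 0 <= v -> 0 < m -> 0 < m' ->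
  m * v <= u -> m' * u <= v -> - ln m <= L -> - ln m' <= L -> 0 <= L ->
  `|ln u - ln v| <= L.
Proof.
move=> u0 v0 m_gt0 m'_gt0 mv_le m'u_le m_L m'_L L0.
have [u_eq0|u_neq0] := eqVneq u 0.
  rewrite u_eq0 in mv_le *.
  have -> : v = 0 by apply/eqP; rewrite eq_le v0 andbT -(pmulr_rle0 _ m_gt0).
  by rewrite subrr normr0.
have u_gt0 : 0 < u by rewrite lt_def u_neq0.
have v_gt0 : 0 < v by apply: lt_le_trans m'u_le; exact: mulr_gt0.
have ln_mv : ln m + ln v <= ln u by rewrite -lnM ?posrE // ler_ln ?posrE // mulr_gt0.
have ln_m'u : ln m' + ln u <= ln v by rewrite -lnM ?posrE // ler_ln ?posrE // mulr_gt0.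
by rewrite ler_norml; apply/andP; split; lra.
Qed.

Lemma dist_min_le (a b c e L : R) : `|a - b| <= L -> `|c - e| <= L ->
  `|Num.min a c - Num.min b e| <= L.
Proof.
rewrite !ler_norml => /andP[ab_ge ab_le] /andP[ce_ge ce_le].
by case: (ltP a c) => ac; case: (ltP b e) => be; apply/andP; split; lra.
Qed.

End Distances.

Section Products.
Variables (R : realType) (d : nat) (dT : measure_display) (T : measurableType dT).
Implicit Types (g : nat -> T -> 'M[R]_d) (w : T).

Lemma Gprod_nneg g w n : (forall k, g k w \is a nneg_mx) -> Gprod g n w \is a nneg_mx.
Proof.
move=> g_nneg; elim: n => [|n IHn] /=; last exact: mxOverM.
by rewrite mxOver_scalar ?rpred0 ?rpred1.
Qed.

Lemma GprodSr g n w : Gprod g n.+1 w = Gprod (fun k => g k.+1) n w *m g 0%N w.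
Proof. by elim: n => [|n /= ->]; rewrite /= ?mulmx1 ?mul1mx ?mulmxA. Qed.

Variables (g : nat -> T -> 'M[R]_d) (w : T).
Hypothesis g_nneg : forall k, g k w \is a nneg_mx.

Lemma l1norm_Gprod_ge (k : R) n (x x' : 'cV[R]_d) :
  0 < k -> A5_mat k (g 0%N w) -> (0 < n)%N -> simplex x -> simplex x' ->
  Num.max (mH x x') k^-1 * l1norm (Gprod g n w *m x') <= l1norm (Gprod g n w *m x).
Proof.
move=> k_gt0 g0_A5 n_gt0 hx hx'.
have Gx'_nneg := mxOverM (Gprod_nneg n g_nneg) (simplex_nneg hx').
rewrite maxr_pMl ?l1norm_ge0 // ge_max; apply/andP; split.
  exact/(l1norm_dominated Gx'_nneg)/mulmx_dominated/(mH_dominated hx hx')/Gprod_nneg.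
case: n n_gt0 Gx'_nneg => // n _ Gx'_nneg; apply: (l1norm_dominated Gx'_nneg).
rewrite GprodSr -!mulmxA; apply: mulmx_dominated (A5_mulmx_dominated _ _ _ _) => //.
exact: Gprod_nneg.
Qed.

Lemma Sn_lipschitz (k : R) n (x x' : 'cV[R]_d) :
  1 < k -> A5_mat k (g 0%N w) -> (0 < n)%N -> simplex x -> simplex x' ->
  `|Sn g n w x - Sn g n w x'| <= (4 + 2 * ln k) * hilbert x x'.
Proof.
move=> k1 g0_A5 n_gt0 hx hx'.
have k_gt0 : 0 < k by lra.
have max_gt0 (y y' : 'cV[R]_d) : 0 < Num.max (mH y y') k^-1.
  by rewrite lt_max invr_gt0 k_gt0 orbT.
rewrite /Sn; apply: (ln_dist_le (l1norm_ge0 _) (l1norm_ge0 _) (max_gt0 x x') (max_gt0 x' x)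
  (l1norm_Gprod_ge k_gt0 g0_A5 n_gt0 hx hx') (l1norm_Gprod_ge k_gt0 g0_A5 n_gt0 hx' hx)).
- by apply: oppr_ln_max_le; rewrite ?mH_ge0 ?mH_le1.
- by rewrite /hilbert [mH x x' * _]mulrC; apply: oppr_ln_max_le; rewrite ?mH_ge0 ?mH_le1.
- apply: mulr_ge0; first by have := ln_gt0 k1; lra.
  by apply: hilbert_ratio_ge0; [apply: mulr_ge0 | apply: mulr_ile1]; rewrite ?mH_ge0 ?mH_le1.
Qed.

End Products.

Lemma minS_lipschitz (R : realType) (d : nat) (dT : measure_display)
    (T : measurableType dT) (g : nat -> T -> 'M[R]_d) (w : T) (x x' : 'cV[R]_d) (L : R) n :
  (forall j, (0 < j)%N -> `|Sn g j w x - Sn g j w x'| <= L) ->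
  `|minS g n w x - minS g n w x'| <= L.
Proof.
move=> Sn_L; rewrite /minS !big_seq.
apply: (big_ind2 (fun a b => `|a - b| <= L)) => [|a b c e|j]; first exact: Sn_L.
  exact: dist_min_le.
by rewrite mem_index_iota => /andP[j_gt0 _]; exact: Sn_L.
Qed.

Section Events.
Variables (R : realType) (d : nat) (dT : measure_display) (T : measurableType dT).
Variables (P : probability T R) (g : nat -> T -> 'M[R]_d).
Hypothesis g_meas : entries_measurable g.

Lemma mx_event_measurable n (A : 'I_d -> 'I_d -> set R) :
  (forall i j, measurable (A i j)) -> measurable (mx_event g n A).
Proof.
move=> A_meas.
have -> : mx_event g n A =
    \bigcap_(ij in [set: 'I_d * 'I_d]) ((fun w => g n w ij.1 ij.2) @^-1` A ij.1 ij.2).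
  by apply/seteqP; split=> [w gA [i j] _ | w gA i j]; [exact: gA | exact: (gA (i, j))].
apply: fin_bigcap_measurable; first exact: finite_finset.
by move=> [i j] _; rewrite -[X in measurable X]setTI; exact: g_meas.
Qed.

Lemma ae_mx_event n (A : 'I_d -> 'I_d -> set R) :
  mx_identically_distributed P g -> (forall i j, measurable (A i j)) ->
  {ae P, forall w, mx_event g 0 A w} -> {ae P, forall w, mx_event g n A w}.
Proof.
move=> g_id A_meas.
have mE m : measurable (mx_event g m A) := mx_event_measurable m A_meas.
move=> /(negligibleP _ (measurableC (mE 0%N))) E0.
apply/(negligibleP _ (measurableC (mE n))).
transitivity (1 - P (mx_event g n A))%E; first exact: probability_setC (mE n).
by rewrite g_id // -E0; symmetry; exact: probability_setC (mE 0%N).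
Qed.

End Events.

Theorem lemma4p3 (R : realType) (d : nat) (dT : measure_display)
  (T : measurableType dT) (P : probability T R) (g : nat -> T -> 'M[R]_d) :
  (2 <= d)%N ->
  entries_measurable g ->
  mx_independent P g ->
  mx_identically_distributed P g ->
  (* mu is supported on allowable matrices *)
  {ae P, forall w, allowable (g 0%N w)} ->
  (* (A2) *)
  (exists2 delta : R, 0 < delta &
     (\int[P]_w ((ln (Nmat (g 0%N w))) `^ (2 + delta))%:E < +oo)%E) ->
  (* (A5) *)
  (exists2 kappa : R, 1 < kappa & {ae P, forall w, A5_mat kappa (g 0%N w)}) ->
  exists2 c : R, 0 < c &
    {ae P, forall w, forall (n : nat), (1 <= n)%N ->
       forall x x', simplex x -> simplex x' -> x <> x' ->
         `|Sn g n w x - Sn g n w x'| <= c * hilbert x x' /\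
         `|minS g n w x - minS g n w x'| <= c * hilbert x x'}.
Proof.
move=> _ g_meas _ g_id g_allowable _ [k k1 g_A5].
exists (4 + 2 * ln k); first by have := ln_gt0 k1; lra.
pose nneg_entries (i j : 'I_d) : set R := `[0, +oo[%classic.
have g_nneg : {ae P, forall w, forall n, mx_event g n nneg_entries w}.
  apply: ae_foralln => n; apply: ae_mx_event => // [i j|]; first exact: measurable_itv.
  apply: filterS g_allowable => w [g0_ge0 _] i j.
  by rewrite /nneg_entries /= in_itv /= andbT g0_ge0.
apply: filterS2 g_nneg g_A5 => w w_nneg w_A5 n n_gt0 x x' hx hx' _.
have gw_nneg m : g m w \is a nneg_mx.
  by apply/mxOverP => i j; have := w_nneg m i j; rewrite /nneg_entries /= in_itv /= andbT.
split; first exact: Sn_lipschitz.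
by apply: minS_lipschitz => j j_gt0; exact: Sn_lipschitz.
Qed.
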